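(* The generic offset polynomial $g(d,\bar x)$ is primitive with respect to $\bar x=(x_1,x_2,x_3)$, i.e. it has no non-constant factor in $\mathbb C[d]$.
   Context: Let $f\in\mathbb C[y_1,y_2,y_3]$ be irreducible, defining a surface $\Sigma$; $f_i=\partial f/\partial y_i$, $h_{\rm imp}=\sum f_i^2$, not identically zero on $\Sigma$. The generic offset $\mathcal O_d(\Sigma)\subset\mathbb C^4$ is the Zariski closure of the projection to $(d,\bar x)$ of the solution set in $(d,\bar x,\bar y,u)$ of: $f(\bar y)=0$; $f_i(\bar y)(x_j-y_j)-f_j(\bar y)(x_i-y_i)=0$ ($i<j$); $\sum_i(x_i-y_i)^2-d^2=0$; $u\,h_{\rm imp}(\bar y)-1=0$. It is a hypersurface, and its square-free defining polynomial $g(d,\bar x)\in\mathbb C[d,\bar x]$ is the generic offset polynomial. *)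

From HB Require Import structures.
From mathcomp Require Import all_boot all_order all_algebra.
Set Implicit Arguments. Unset Strict Implicit. Unset Printing Implicit Defensive.
Import Order.TTheory GRing.Theory.
Local Open Scope ring_scope.

(* R[y1,y2,y3]: innermost variable y1, middle y2, outermost y3. *)
Definition poly3 (R : nzRingType) := {poly {poly {poly R}}}.
(* R[d,x1,x2,x3]: innermost d, then x1, x2, outermost x3. *)
Definition poly4 (R : nzRingType) := {poly {poly {poly {poly R}}}}.

Definition eval3 (R : comNzRingType) (p : {poly {poly {poly R}}}) (y1 y2 y3 : R) : R :=
  ((p.[y3%:P%:P]).[y2%:P]).[y1].

Definition eval4 (R : comNzRingType) (p : {poly {poly {poly {poly R}}}})
    (d x1 x2 x3 : R) : R :=
  (((p.[x3%:P%:P%:P]).[x2%:P%:P]).[x1%:P]).[d].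

Definition pd1 (R : nzRingType) (p : {poly {poly {poly R}}}) : {poly {poly {poly R}}} :=
  map_poly (map_poly (@deriv R)) p.
Definition pd2 (R : nzRingType) (p : {poly {poly {poly R}}}) : {poly {poly {poly R}}} :=
  map_poly (@deriv {poly R}) p.
Definition pd3 (R : nzRingType) (p : {poly {poly {poly R}}}) : {poly {poly {poly R}}} :=
  deriv p.

Definition irreducible_elt (A : comUnitRingType) (f : A) : Prop :=
  f != 0 /\ f \isn't a GRing.unit /\
  forall a b : A, f = a * b -> a \is a GRing.unit \/ b \is a GRing.unit.

(* ring divisibility (not the pseudo-division %| of polydiv) *)
Definition rdvd (A : comNzRingType) (a b : A) : Prop := exists r : A, b = a * r.

Definition offset_incidence (R : comUnitRingType) (f : {poly {poly {poly R}}})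
    (d x1 x2 x3 : R) : Prop :=
  exists (y1 y2 y3 u : R),
    let f1 := eval3 (pd1 f) y1 y2 y3 in
    let f2 := eval3 (pd2 f) y1 y2 y3 in
    let f3 := eval3 (pd3 f) y1 y2 y3 in
    [/\ eval3 f y1 y2 y3 = 0,
        f1 * (x2 - y2) - f2 * (x1 - y1) = 0,
        f1 * (x3 - y3) - f3 * (x1 - y1) = 0,
        f2 * (x3 - y3) - f3 * (x2 - y2) = 0 &
        (x1 - y1) ^+ 2 + (x2 - y2) ^+ 2 + (x3 - y3) ^+ 2 - d ^+ 2 = 0 /\
        u * (f1 ^+ 2 + f2 ^+ 2 + f3 ^+ 2) - 1 = 0].

(* g is a (square-free) defining polynomial of the Zariski closure of the
   projection: a nonzero polynomial generating the vanishing ideal of it. *)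
Definition generic_offset_poly (R : comUnitRingType) (f : {poly {poly {poly R}}})
    (g : {poly {poly {poly {poly R}}}}) : Prop :=
  g != 0 /\
  forall p : {poly {poly {poly {poly R}}}},
    (forall d x1 x2 x3, offset_incidence f d x1 x2 x3 -> eval4 p d x1 x2 x3 = 0)
    <-> rdvd g p.

(* The incidence set is a union of normal lines {(e, y + e a)}, a a unit
   normal at a regular point y of the surface, along which d takes every
   value.  If (d - d0) divided g, the cofactor would vanish on each normal line
   away from d = d0, hence on the whole line, hence on the incidence set; so g
   would divide its own cofactor and d - d0 would be a unit. *)

From HB Require Import structures.
From mathcomp Require Import all_boot all_order all_algebra ring.
Set Implicit Arguments. Unset Strict Implicit. Unset Printing Implicit Defensive.
Import GRing.Theory.
Local Open Scope ring_scope.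

Section Vectors.
Variable R : fieldType.

Definition parallel3 (n1 n2 n3 a1 a2 a3 : R) : Prop :=
  [/\ n1 * a2 - n2 * a1 = 0, n1 * a3 - n3 * a1 = 0 & n2 * a3 - n3 * a2 = 0].

Definition sqnorm3 (a1 a2 a3 : R) : R := a1 ^+ 2 + a2 ^+ 2 + a3 ^+ 2.

Lemma parallel3_refl n1 n2 n3 : parallel3 n1 n2 n3 n1 n2 n3.
Proof. by split; ring. Qed.

Lemma parallel3_scale n1 n2 n3 a1 a2 a3 c :
  parallel3 n1 n2 n3 a1 a2 a3 -> parallel3 n1 n2 n3 (a1 * c) (a2 * c) (a3 * c).
Proof.
case=> h12 h13 h23; split.
- by rewrite mulrA (mulrA n2) -mulrBl h12 mul0r.
- by rewrite mulrA (mulrA n3) -mulrBl h13 mul0r.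
- by rewrite mulrA (mulrA n3) -mulrBl h23 mul0r.
Qed.

Lemma sqnorm3_scale a1 a2 a3 c :
  sqnorm3 (a1 * c) (a2 * c) (a3 * c) = sqnorm3 a1 a2 a3 * c ^+ 2.
Proof. by rewrite /sqnorm3; ring. Qed.

(* With S = a.n and N = n.n, parallelism gives N a = S n, hence
   N S^2 = N^2 (a.a); so a.a = 0 forces S = 0 and then a = 0. *)
Lemma isotropic_parallel3_eq0 n1 n2 n3 a1 a2 a3 :
  sqnorm3 n1 n2 n3 != 0 -> parallel3 n1 n2 n3 a1 a2 a3 -> sqnorm3 a1 a2 a3 = 0 ->
  [/\ a1 = 0, a2 = 0 & a3 = 0].
Proof.
move=> nN0 [h12 h13 h23] a_iso.
set N := sqnorm3 n1 n2 n3 in nN0; set S := a1 * n1 + a2 * n2 + a3 * n3.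
have e1 : a1 * N = n1 * S.
  apply/subr0_eq; transitivity (- (n2 * (n1 * a2 - n2 * a1)) - n3 * (n1 * a3 - n3 * a1)).
    by rewrite /N /sqnorm3 /S; ring.
  by rewrite h12 h13; ring.
have e2 : a2 * N = n2 * S.
  apply/subr0_eq; transitivity (n1 * (n1 * a2 - n2 * a1) - n3 * (n2 * a3 - n3 * a2)).
    by rewrite /N /sqnorm3 /S; ring.
  by rewrite h12 h23; ring.
have e3 : a3 * N = n3 * S.
  apply/subr0_eq; transitivity (n1 * (n1 * a3 - n3 * a1) + n2 * (n2 * a3 - n3 * a2)).
    by rewrite /N /sqnorm3 /S; ring.
  by rewrite h13 h23; ring.
have S0 : S = 0.
  have : sqnorm3 (n1 * S) (n2 * S) (n3 * S) = sqnorm3 (a1 * N) (a2 * N) (a3 * N).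
    by rewrite e1 e2 e3.
  rewrite !sqnorm3_scale a_iso mul0r => /eqP.
  by rewrite mulf_eq0 (negbTE nN0) expf_eq0 => /eqP.
have eq0 a : a * N = 0 -> a = 0 by move/eqP; rewrite mulf_eq0 (negbTE nN0) orbF => /eqP.
by rewrite S0 !mulr0 in e1 e2 e3; split; apply: eq0.
Qed.

End Vectors.

Lemma exists_unit_parallel3 (C : closedFieldType) (n1 n2 n3 : C) :
  sqnorm3 n1 n2 n3 != 0 ->
  exists a1 a2 a3, parallel3 n1 n2 n3 a1 a2 a3 /\ sqnorm3 a1 a2 a3 = 1.
Proof.
move=> nN0; have [s] : exists s, root ('X^2 - (sqnorm3 n1 n2 n3)%:P) s.
  by apply/closed_rootP; rewrite size_XnsubC.
rewrite /root !hornerE subr_eq0 => /eqP s2.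
have s0 : s != 0 by apply: contraNneq nN0 => s0; rewrite -s2 s0 expr0n.
exists (n1 / s), (n2 / s), (n3 / s); split; first exact/parallel3_scale/parallel3_refl.
by rewrite sqnorm3_scale -s2 -exprMn mulfV ?expr1n.
Qed.

Section NormalLines.
Variables (R : fieldType) (f : {poly {poly {poly R}}}).

Definition regular_point (y1 y2 y3 : R) : Prop :=
  eval3 f y1 y2 y3 = 0 /\
  sqnorm3 (eval3 (pd1 f) y1 y2 y3) (eval3 (pd2 f) y1 y2 y3) (eval3 (pd3 f) y1 y2 y3) != 0.

Definition normal_direction (y1 y2 y3 a1 a2 a3 : R) : Prop :=
  parallel3 (eval3 (pd1 f) y1 y2 y3) (eval3 (pd2 f) y1 y2 y3) (eval3 (pd3 f) y1 y2 y3)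
    a1 a2 a3 /\ sqnorm3 a1 a2 a3 = 1.

Lemma offset_incidence_normal_line y1 y2 y3 a1 a2 a3 e :
  regular_point y1 y2 y3 -> normal_direction y1 y2 y3 a1 a2 a3 ->
  offset_incidence f e (y1 + a1 * e) (y2 + a2 * e) (y3 + a3 * e).
Proof.
move=> [fy0 nN0] [a_par a_unit].
have [h12 h13 h23] := parallel3_scale e a_par.
exists y1, y2, y3, (sqnorm3 (eval3 (pd1 f) y1 y2 y3) (eval3 (pd2 f) y1 y2 y3)
                            (eval3 (pd3 f) y1 y2 y3))^-1.
rewrite ![_ + _ * e - _]addrAC !subrr !add0r; split=> //; split.
  by have := sqnorm3_scale a1 a2 a3 e; rewrite a_unit mul1r /sqnorm3 => ->; rewrite subrr.
by rewrite mulVf ?subrr.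
Qed.

End NormalLines.

Lemma offset_incidence_on_normal_line (C : closedFieldType) f (d x1 x2 x3 : C) :
  offset_incidence f d x1 x2 x3 ->
  exists y1 y2 y3 a1 a2 a3, [/\ regular_point f y1 y2 y3,
    normal_direction f y1 y2 y3 a1 a2 a3 &
    [/\ x1 = y1 + a1 * d, x2 = y2 + a2 * d & x3 = y3 + a3 * d]].
Proof.
case=> [y1 [y2 [y3 [u]]]] /=.
set n1 := eval3 (pd1 f) y1 y2 y3; set n2 := eval3 (pd2 f) y1 y2 y3.
set n3 := eval3 (pd3 f) y1 y2 y3.
case=> fy0 h12 h13 h23 [dist hu].
have nN0 : sqnorm3 n1 n2 n3 != 0.
  apply/eqP => nN0; move/eqP: hu; rewrite /sqnorm3 in nN0.
  by rewrite nN0 mulr0 sub0r oppr_eq0 oner_eq0.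
have x_par : parallel3 n1 n2 n3 (x1 - y1) (x2 - y2) (x3 - y3) by [].
exists y1, y2, y3.
have [d_eq0|d_neq0] := eqVneq d 0.
  rewrite d_eq0 expr0n subr0 in dist *.
  have [a1x a2x a3x] := isotropic_parallel3_eq0 nN0 x_par dist.
  have [a1 [a2 [a3 a_unit]]] := exists_unit_parallel3 nN0.
  exists a1, a2, a3; split=> //.
  by rewrite !mulr0 !addr0 -(subr0_eq a1x) -(subr0_eq a2x) -(subr0_eq a3x).
exists ((x1 - y1) / d), ((x2 - y2) / d), ((x3 - y3) / d); split=> //.
  split; first exact: parallel3_scale.
  by rewrite sqnorm3_scale /sqnorm3 (subr0_eq dist) -exprMn mulfV ?expr1n.
by split; rewrite divfK // addrC subrK.
Qed.

Definition map_poly4 (A B : nzRingType) (phi : A -> B)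
    (p : {poly {poly {poly {poly A}}}}) : {poly {poly {poly {poly B}}}} :=
  map_poly (map_poly (map_poly (map_poly phi))) p.

Lemma eval4_map_poly4 (A B : comNzRingType) (phi : {rmorphism A -> B}) p d x1 x2 x3 :
  eval4 (map_poly4 phi p) (phi d) (phi x1) (phi x2) (phi x3) = phi (eval4 p d x1 x2 x3).
Proof.
have E3 : (phi x3)%:P%:P%:P = map_poly (map_poly (map_poly phi)) x3%:P%:P%:P.
  by rewrite map_polyC /= map_polyC /= map_polyC.
have E2 : (phi x2)%:P%:P = map_poly (map_poly phi) x2%:P%:P.
  by rewrite map_polyC /= map_polyC.
have E1 : (phi x1)%:P = map_poly phi x1%:P by rewrite map_polyC.
by rewrite /eval4 /map_poly4 E3 horner_map E2 horner_map E1 !horner_map.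
Qed.

Lemma eval4M (A : comNzRingType) (p q : {poly {poly {poly {poly A}}}}) d x1 x2 x3 :
  eval4 (p * q) d x1 x2 x3 = eval4 p d x1 x2 x3 * eval4 q d x1 x2 x3.
Proof. by rewrite /eval4 !hornerM. Qed.

Lemma eval4C (A : comNzRingType) (c : {poly A}) d x1 x2 x3 :
  eval4 c%:P%:P%:P d x1 x2 x3 = c.[d].
Proof. by rewrite /eval4 !hornerC. Qed.

Lemma eval4_1 (A : comNzRingType) (d x1 x2 x3 : A) :
  eval4 (1 : {poly {poly {poly {poly A}}}}) d x1 x2 x3 = 1.
Proof. by rewrite /eval4 !hornerC. Qed.

Lemma XsubC_poly4_mul_neq1 (A : comNzRingType) (d0 : A) (s : {poly {poly {poly {poly A}}}}) :
  ('X - d0%:P)%:P%:P%:P * s != 1.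
Proof.
apply/eqP => Ls.
have : eval4 ('X - d0%:P)%:P%:P%:P d0 0 0 0 * eval4 s d0 0 0 0 = 1.
  (* Rewriting with eval4C while [eval4 1] is present makes Rocq try to unify
     1 with a nested constant polynomial, which does not terminate in practice. *)
  by rewrite -eval4M Ls eval4_1.
by rewrite eval4C hornerXsubC subrr mul0r => /eqP; rewrite eq_sym oner_eq0.
Qed.

Lemma eval4_line (A : comNzRingType) (p : {poly {poly {poly {poly A}}}}) y1 y2 y3 a1 a2 a3 :
  exists P : {poly A}, forall e,
    P.[e] = eval4 p e (y1 + a1 * e) (y2 + a2 * e) (y3 + a3 * e).
Proof.
exists (eval4 (map_poly4 polyC p) 'X
          (y1%:P + a1%:P * 'X) (y2%:P + a2%:P * 'X) (y3%:P + a3%:P * 'X)) => e.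
have polyCK : cancel (map_poly4 (@polyC A)) (map_poly4 (horner_eval e)).
  rewrite /map_poly4.
  do 4 (apply: map_polyK; last by rewrite ?map_poly0 ?horner_evalE ?horner0).
  by move=> c; rewrite horner_evalE hornerC.
by rewrite -[LHS]horner_evalE -eval4_map_poly4 polyCK /= !horner_evalE !hornerE.
Qed.

Lemma poly_eq0_off_point (C : closedFieldType) (P : {poly C}) d0 :
  (forall e, e != d0 -> P.[e] = 0) -> P = 0.
Proof.
move=> P0; apply/eqP; apply: contraT => P_neq0.
(* A root of the nonconstant (X - d0) P - 1 can be neither d0 nor a root of P. *)
have [e] : exists e, root (('X - d0%:P) * P - 1) e.
  apply/closed_rootP; rewrite size_polyDl size_mul ?polyXsubC_eq0 ?size_XsubC //.
    by rewrite !addSn /= eqSS size_poly_eq0.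
  by rewrite size_polyN size_poly1 !addSn /= ltnS lt0n size_poly_eq0.
rewrite /root !hornerE; have [->|/P0->] := eqVneq e d0.
  by rewrite subrr mul0r sub0r oppr_eq0 oner_eq0.
by rewrite mulr0 sub0r oppr_eq0 oner_eq0.
Qed.

Definition vanishes_on_offset (R : comUnitRingType) (f : {poly {poly {poly R}}})
    (p : {poly {poly {poly {poly R}}}}) : Prop :=
  forall d x1 x2 x3, offset_incidence f d x1 x2 x3 -> eval4 p d x1 x2 x3 = 0.

Lemma vanishes_on_offset_divXsubC (C : closedFieldType) f d0
    (p : {poly {poly {poly {poly C}}}}) :
  vanishes_on_offset f (('X - d0%:P)%:P%:P%:P * p) -> vanishes_on_offset f p.
Proof.
move=> Lp0 d x1 x2 x3 /offset_incidence_on_normal_line.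
case=> [y1 [y2 [y3 [a1 [a2 [a3 [y_reg a_dir [-> -> ->]]]]]]]].
have [P P_line] := eval4_line p y1 y2 y3 a1 a2 a3.
rewrite -P_line (@poly_eq0_off_point _ P d0) ?horner0 // => e e_neq_d0.
have := Lp0 _ _ _ _ (offset_incidence_normal_line e y_reg a_dir).
rewrite eval4M eval4C hornerXsubC P_line => /eqP.
by rewrite mulf_eq0 subr_eq0 (negbTE e_neq_d0) => /eqP.
Qed.

Theorem mainTheorem7 (C : closedFieldType) (charC0 : [pchar C] =i pred0)
  (f : {poly {poly {poly C}}})
  (f_irr : irreducible_elt f)
  (h_nonzero_on_surface : exists y1 y2 y3 : C,
      eval3 f y1 y2 y3 = 0 /\
      (eval3 (pd1 f) y1 y2 y3) ^+ 2 + (eval3 (pd2 f) y1 y2 y3) ^+ 2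
        + (eval3 (pd3 f) y1 y2 y3) ^+ 2 != 0)
  (g : {poly {poly {poly {poly C}}}})
  (g_def : generic_offset_poly f g) :
  forall q : {poly C}, rdvd (q%:P%:P%:P) g -> (size q <= 1)%N.
Proof.
move=> q [r def_g]; rewrite leqNgt; apply/negP => q_gt1.
have [d0 /factor_theorem [q1 def_q]] : exists d0, root q d0.
  by apply/closed_rootP; rewrite neq_ltn q_gt1 orbT.
case: g_def => g_neq0 g_ideal.
have def_gL : g = ('X - d0%:P)%:P%:P%:P * (q1%:P%:P%:P * r).
  (* [exact] rather than [rewrite mulrA]: rewriting is very slow at this type. *)
  rewrite def_g def_q !polyCM.
  exact: etrans (esym (mulrA _ _ _)) (esym (mulrCA _ _ _)).
have [s def_g'] : rdvd g (q1%:P%:P%:P * r).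
  apply/g_ideal/(vanishes_on_offset_divXsubC (d0 := d0)); rewrite -def_gL.
  by apply/g_ideal; exists 1; rewrite mulr1.
rewrite def_g' in def_gL.
apply: (elimN eqP (XsubC_poly4_mul_neq1 d0 s)); apply: (mulfI g_neq0).
rewrite mulr1 [RHS]def_gL; exact: mulrCA.
Qed.
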